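(* Let $\mathcal F$ be a finite family of nonempty subsets of $[r]$. Then $\Delta_{\mathcal F}$ equals the set of all $x\in\mathbb R^r$ with $x_i\ge0$ for all $i$, $x_1+\dots+x_r=|\mathcal F|$, and $$\sum_{i\in G}x_i\;\ge\;\bigl|\{F\in\mathcal F: F\subseteq G\}\bigr|\qquad\text{for all } G\subseteq[r].$$ Moreover, it suffices to impose these inequalities for the sets $G$ belonging to the building closure $\widehat{\mathcal F}$ of $\mathcal F$.
   Context: For $F\subseteq[r]$ nonempty, $\Delta_F=\{x\in\mathbb R^r_{\ge0}: \sum_i x_i=1,\ x_i=0 \text{ for } i\notin F\}=\operatorname{conv}\{e_i:i\in F\}$. For a family $\mathcal F$ of nonempty subsets of $[r]$, $\Delta_{\mathcal F}=\sum_{F\in\mathcal F}\Delta_F$ (Minkowski sum). The building closure $\widehat{\mathcal F}$ is the smallest family of subsets of $[r]$ containing $\mathcal F$ and all singletons such that $F\cup F'\in\widehat{\mathcal F}$ whenever $F,F'\in\widehat{\mathcal F}$ and $F\cap F'\ne\emptyset$. *)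

From HB Require Import structures.
From mathcomp Require Import all_boot all_order all_algebra.
From mathcomp Require Import reals.
Set Implicit Arguments. Unset Strict Implicit. Unset Printing Implicit Defensive.
Import Order.TTheory GRing.Theory Num.Theory.
Local Open Scope ring_scope.

(* Points of R^r are functions 'I_r -> R; [r] = {1..r} is modelled by 'I_r. *)

(* The simplex Delta_F = conv{e_i : i in F}. *)
Definition simplex (R : realType) (r : nat) (F : {set 'I_r}) (x : 'I_r -> R) : Prop :=
  (forall i, 0 <= x i) /\ \sum_i x i = 1 /\ (forall i, i \notin F -> x i = 0).

Definition minkowski_simplex (R : realType) (r : nat) (Fam : {set {set 'I_r}})
  (x : 'I_r -> R) : Prop :=
  exists y : {set 'I_r} -> 'I_r -> R,
    (forall F, F \in Fam -> simplex F (y F)) /\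
    (forall i, x i = \sum_(F in Fam) y F i).

Definition building_closed (r : nat) (B : {set {set 'I_r}}) : bool :=
  [forall F in B, forall G in B, (F :&: G != set0) ==> (F :|: G \in B)].

Definition building_closure (r : nat) (Fam : {set {set 'I_r}}) : {set {set 'I_r}} :=
  \bigcap_(B : {set {set 'I_r}} | [&& Fam \subset B, [forall i : 'I_r, [set i] \in B] & building_closed B]) B.

From mathcomp Require Import all_boot all_order all_algebra.
From mathcomp Require Import reals ring lra.

(* Write [c(G)] for the number of members of the family contained in [G]; the
   inequalities are clearly necessary.  For sufficiency induct on the total size
   of the members.  If a member [F] contains [i != j], moving a suitable mass
   [t >= 0] from [i] to [j] keeps the inequalities valid for the family with [F]
   replaced by [F \ i]: such a [t] exists because [c] is supermodular, and strictly
   so on pairs [G, H] with [F] inside [G :|: H] but neither in [G] nor in [H].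
   Moving some [s >= 0] from [j] to [i] works likewise for [F \ j], and [x] is
   a convex combination of the two shifted points.  When all members are
   singletons, the inequalities on singletons force [x] to count them.

   For the building closure: given [i] in [G], take a largest [H] of the closure
   with [i \in H \subset G].  By maximality every member inside [G] lies in [H]
   or in [G :\: H], so the inequality for [G] follows from the one for [H] and,
   by induction on [#|G|], the one for [G :\: H]. *)

Set Implicit Arguments. Unset Strict Implicit. Unset Printing Implicit Defensive.
Import Order.TTheory GRing.Theory Num.Theory.
Local Open Scope ring_scope.

Lemma natr_card_setIdE (R : pzSemiRingType) (I : finType) (P : {set I}) (p : pred I) :
  #|[set k in P | p k]|%:R = \sum_(k in P) (p k)%:R :> R.
Proof.
rewrite -sum1_card natr_sum big_mkcond [RHS]big_mkcond /=.
by apply: eq_bigr => k _; rewrite inE; case: (k \in P); case: (p k).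
Qed.

Lemma sumr_setUI (R : nmodType) (T : finType) (G H : {set T}) (x : T -> R) :
  \sum_(l in G :|: H) x l + \sum_(l in G :&: H) x l = \sum_(l in G) x l + \sum_(l in H) x l.
Proof.
rewrite (@big_setID _ _ _ _ (G :|: H) H) (@big_setID _ _ _ _ G H) /=.
rewrite (setIidPr (subsetUr G H)) setDUl setDv setU0.
by rewrite [LHS]addrC addrA addrAC.
Qed.

Lemma exists_between (R : realDomainType) (T : finType) (p q : pred T) (lo hi : T -> R) :
  (forall a b, p a -> q b -> lo a <= hi b) -> (forall b, q b -> 0 <= hi b) ->
  exists2 t, 0 <= t & (forall a, p a -> lo a <= t) /\ (forall b, q b -> t <= hi b).
Proof.
move=> lo_hi hi_ge0; exists (\big[Num.max/0]_(a | p a) lo a); first exact: bigmax_ge_id.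
split=> [a pa | b qb]; first exact: le_bigmax_cond.
by apply: bigmax_le => [|a pa]; [exact: hi_ge0 | exact: lo_hi].
Qed.

Section HallTheorem.
Variables (R : realType) (r : nat) (I : finType) (P : {set I}).
Implicit Types (A : I -> {set 'I_r}) (x : 'I_r -> R) (G H : {set 'I_r}).

(* The family is indexed by [P] so that shrinking one member never merges it
   with another. *)
Definition covered A G : {set I} := [set k in P | A k \subset G].

Definition hall_feasible A x : Prop :=
  \sum_l x l = #|P|%:R /\ forall G, #|covered A G|%:R <= \sum_(l in G) x l.

Definition in_simplex_sum A x : Prop :=
  exists y : I -> 'I_r -> R,
    (forall k, k \in P -> simplex (A k) (y k)) /\ forall l, x l = \sum_(k in P) y k l.

Lemma sum_simplex_on (S : {set 'I_r}) (y : 'I_r -> R) G :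
  simplex S y -> S \subset G -> \sum_(l in G) y l = 1.
Proof.
case=> _ [sum_y y_out] SG.
rewrite -sum_y [RHS](bigID (mem G)) /= [X in _ = _ + X]big1 ?addr0 //.
by move=> l lG; apply: y_out; apply: contra lG; apply: subsetP.
Qed.

Lemma in_simplex_sum_hall_feasible A x : in_simplex_sum A x -> hall_feasible A x.
Proof.
case=> y [y_simplex x_eq]; split=> [|G]; under eq_bigr do rewrite x_eq.
  rewrite exchange_big /= -sumr_const; apply: eq_bigr => k kP.
  by case: (y_simplex k kP) => _ [].
rewrite exchange_big natr_card_setIdE /=; apply: ler_sum => k kP.
have [AkG | _] := boolP (A k \subset G); first by rewrite (sum_simplex_on (y_simplex k kP)).
by case: (y_simplex k kP) => y_ge0 _; apply: sumr_ge0.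
Qed.

Lemma hall_feasible_ge0 A x l : hall_feasible A x -> 0 <= x l.
Proof. by case=> _ /(_ [set l]); rewrite big_set1; apply: le_trans. Qed.

Lemma hall_feasible_neq0 A x k : hall_feasible A x -> k \in P -> A k != set0.
Proof.
case=> _ /(_ set0) + kP; rewrite big_set0 lern0 cards_eq0; apply: contraTneq => Ak0.
by apply/set0Pn; exists k; rewrite inE kP Ak0 sub0set.
Qed.

Lemma card_covered_supermodular A G H k :
  k \in covered A (G :|: H) -> k \notin covered A G -> k \notin covered A H ->
  (#|covered A G| + #|covered A H| < #|covered A (G :|: H)| + #|covered A (G :&: H)|)%N.
Proof.
move=> kGH kG kH.
have coveredI : covered A (G :&: H) = covered A G :&: covered A H.
  by apply/setP => k'; rewrite !inE subsetI; case: (k' \in P).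
have coveredU : covered A G :|: covered A H \proper covered A (G :|: H).
  apply/properP; split; last by exists k => //; rewrite inE negb_or kG kH.
  apply/subsetP => k'; rewrite !inE => /orP[] /andP[-> /subset_trans]; apply.
    exact: subsetUl.
  exact: subsetUr.
by rewrite coveredI -cardsUI ltn_add2r proper_card.
Qed.

Definition slack A x G : R := \sum_(l in G) x l - #|covered A G|%:R.

Lemma slack_ge0 A x G : hall_feasible A x -> 0 <= slack A x G.
Proof. by case=> _ /(_ G); rewrite subr_ge0. Qed.

Lemma slack_sum_ge1 A x G H k : hall_feasible A x -> k \in P ->
  A k \subset G :|: H -> ~~ (A k \subset G) -> ~~ (A k \subset H) ->
  1 <= slack A x G + slack A x H.
Proof.
move=> [_ cov] kP AkGH AkG AkH.
have := @card_covered_supermodular A G H k.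
rewrite !inE kP AkGH AkG AkH => /(_ isT isT isT).
rewrite -(ler_nat R) -addn1 !natrD /slack.
have := sumr_setUI G H x; have := cov (G :|: H); have := cov (G :&: H); lra.
Qed.

Definition move_mass x t i j : 'I_r -> R :=
  fun l => x l + t * ((l == j)%:R - (l == i)%:R).

Lemma sum_move_mass x t i j (p : pred 'I_r) :
  \sum_(l | p l) move_mass x t i j l = \sum_(l | p l) x l + t * ((p j)%:R - (p i)%:R).
Proof.
have sum_eq m : \sum_(l | p l) (l == m)%:R = (p m)%:R :> R.
  rewrite big_mkcond (bigD1 m) //= eqxx big1 ?addr0; first by case: (p m).
  by move=> l /negbTE ->; case: (p l).
by rewrite big_split /= -mulr_sumr sumrB !sum_eq.
Qed.

Lemma sum_move_mass_setT x t i j : \sum_l move_mass x t i j l = \sum_l x l.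
Proof. by rewrite (sum_move_mass _ _ _ _ predT) subrr mulr0 addr0. Qed.

Lemma sum_move_mass_set x t i j G :
  \sum_(l in G) move_mass x t i j l = \sum_(l in G) x l + t * ((j \in G)%:R - (i \in G)%:R).
Proof. exact: (sum_move_mass _ _ _ _ (mem G)). Qed.

Definition shrink A k0 i : I -> {set 'I_r} :=
  fun k => if k == k0 then A k0 :\ i else A k.

Lemma shrink_sub A k0 i k : shrink A k0 i k \subset A k.
Proof. by rewrite /shrink; case: eqP => [->|_]; [apply: subsetDl | apply: subxx]. Qed.

Lemma card_covered_shrink A k0 i G :
  (#|covered (shrink A k0 i) G| <= #|covered A G| + ((A k0 :\ i \subset G) && (i \notin G)))%N.
Proof.
case crit: (_ && _) => /=.
  rewrite addn1; apply: (@leq_trans #|k0 |: covered A G|).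
    by apply/subset_leq_card/subsetP => k; rewrite !inE /shrink; case: eqP.
  by rewrite cardsU1 addnC -addn1 leq_add2l leq_b1.
rewrite addn0; apply/subset_leq_card/subsetP => k; rewrite !inE /shrink.
case: eqP => [-> | _] // /andP[-> Ak0G] /=.
move: crit; rewrite Ak0G /= => /negbFE iG.
move: Ak0G; rewrite subDset => /subset_trans; apply.
by rewrite subUset sub1set iG subxx.
Qed.

Lemma hall_feasible_shrink A x k0 i j :
  hall_feasible A x -> k0 \in P -> i \in A k0 -> j \in A k0 -> i != j ->
  exists2 t, 0 <= t & hall_feasible (shrink A k0 i) (move_mass x t i j).
Proof.
move=> feas k0P iA jA ij.
(* [crit G] holds when removing [i] from [A k0] raises the count of [G]. *)
pose crit G := (A k0 :\ i \subset G) && (i \notin G).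
have [t t_ge0 [t_ge t_le]] : exists2 t, 0 <= t &
    (forall G, crit G -> 1 - slack A x G <= t) /\
    (forall H, (i \in H) && (j \notin H) -> t <= slack A x H).
  apply: exists_between => [G H /andP[Ak0G iG] /andP[iH jH] | H _]; last exact: slack_ge0.
  rewrite lerBlDr addrC; apply: (slack_sum_ge1 feas k0P).
  - move: Ak0G; rewrite subDset => /subset_trans; apply.
    by rewrite subUset sub1set subsetUl in_setU iH orbT.
  - by apply: contra iG => /subsetP/(_ i iA).
  - by apply: contra jH => /subsetP/(_ j jA).
exists t => //; split; first by rewrite sum_move_mass_setT; case: feas.
move=> G; rewrite sum_move_mass_set.
have := card_covered_shrink A k0 i G; rewrite -(ler_nat R) natrD.
have := feas.2 G; have := t_ge G; have := t_le G; rewrite /slack /crit.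
case: (boolP ((A k0 :\ i \subset G) && (i \notin G))) => [/andP[Ak0G iG] | _].
  have jG : j \in G by apply: (subsetP Ak0G); rewrite !inE eq_sym ij.
  by rewrite jG (negbTE iG) /=; lra.
case: (i \in G); case: (j \in G) => /=; lra.
Qed.

Lemma sum_card_shrink A k0 i : k0 \in P -> i \in A k0 ->
  (\sum_(k in P) #|shrink A k0 i k| < \sum_(k in P) #|A k|)%N.
Proof.
move=> k0P iA; rewrite (bigD1 k0) //= [ltnRHS](bigD1 k0) //= {1}/shrink eqxx.
rewrite [#|A k0|](cardsD1 i) iA add1n addSn ltnS leq_add2l.
by apply: leq_sum => k _; apply/subset_leq_card/shrink_sub.
Qed.

Lemma in_simplex_sum_sub A A' x :
  (forall k, A' k \subset A k) -> in_simplex_sum A' x -> in_simplex_sum A x.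
Proof.
move=> A'A [y [y_simplex x_eq]]; exists y; split=> // k kP.
have [y_ge0 [sum_y y_out]] := y_simplex k kP; split=> //; split=> // l lA.
by apply: y_out; apply: contra lA; apply: subsetP.
Qed.

Lemma in_simplex_sum_convex A x x1 x2 a b : 0 <= a -> 0 <= b -> a + b = 1 ->
  (forall l, x l = a * x1 l + b * x2 l) ->
  in_simplex_sum A x1 -> in_simplex_sum A x2 -> in_simplex_sum A x.
Proof.
move=> a_ge0 b_ge0 ab x_eq [y1 [y1_simplex x1_eq]] [y2 [y2_simplex x2_eq]].
exists (fun k l => a * y1 k l + b * y2 k l); split=> [k kP | l]; last first.
  by rewrite x_eq x1_eq x2_eq big_split /= -!mulr_sumr.
have [y1_ge0 [sum_y1 y1_out]] := y1_simplex k kP.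
have [y2_ge0 [sum_y2 y2_out]] := y2_simplex k kP.
split=> [l | ]; first by rewrite addr_ge0 ?mulr_ge0.
split=> [| l lA]; first by rewrite big_split /= -!mulr_sumr sum_y1 sum_y2 !mulr1.
by rewrite y1_out // y2_out // !mulr0 addr0.
Qed.

Lemma in_simplex_sum_card1 A x :
  (forall k, k \in P -> #|A k| == 1%N) -> hall_feasible A x -> in_simplex_sum A x.
Proof.
move=> A1 [sum_x cov].
pose y k l : R := (A k \subset [set l])%:R.
have sum_y k : k \in P -> \sum_l y k l = 1.
  move=> kP; rewrite /y; have [a ->] := cards1P (A1 k kP).
  rewrite (bigD1 a) //= sub1set set11.
  by rewrite big1 ?addr0 // => l la; rewrite sub1set inE eq_sym (negbTE la).
have gap_ge0 l : 0 <= x l - \sum_(k in P) y k l.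
  by rewrite subr_ge0 -natr_card_setIdE; have := cov [set l]; rewrite big_set1.
have gap_sum : \sum_l (x l - \sum_(k in P) y k l) = 0.
  rewrite sumrB sum_x exchange_big /= -sumr_const; apply/eqP; rewrite subr_eq0.
  by apply/eqP/eq_bigr => k kP; rewrite sum_y.
exists y; split=> [k kP | l]; last first.
  by apply/eqP; rewrite -subr_eq0; apply/eqP/(psumr_eq0P (fun l _ => gap_ge0 l) gap_sum).
split=> [l | ]; first exact: ler0n.
split=> [| l lA]; first exact: sum_y.
have [a Aka] := cards1P (A1 k kP); move: lA; rewrite /y Aka sub1set !inE eq_sym.
by move/negbTE ->.
Qed.

Lemma hall_feasible_in_simplex_sum A x : hall_feasible A x -> in_simplex_sum A x.
Proof.
have [n] := ubnP (\sum_(k in P) #|A k|); elim: n A x => // n IH A x /ltnSE weightA feas.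
case: (boolP [exists k in P, 1 < #|A k|]%N) => [|small]; last first.
  apply: in_simplex_sum_card1 (feas) => k kP.
  rewrite eqn_leq card_gt0 (hall_feasible_neq0 feas kP).
  by rewrite leqNgt andbT; apply: contra small => Ak1; apply/exists_inP; exists k.
case/exists_inP => k0 k0P /card_gt1P[i [j [iA jA ij]]].
have IH_shrink i' x' : i' \in A k0 -> hall_feasible (shrink A k0 i') x' -> in_simplex_sum A x'.
  move=> i'A feas'; apply: (in_simplex_sum_sub (@shrink_sub A k0 i')); apply: IH feas'.
  exact: leq_trans (sum_card_shrink k0P i'A) weightA.
have [t t_ge0 /(IH_shrink _ _ iA) sum_i] := hall_feasible_shrink feas k0P iA jA ij.
have ji : j != i by rewrite eq_sym.
have [s s_ge0 /(IH_shrink _ _ jA) sum_j] := hall_feasible_shrink feas k0P jA iA ji.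
have [st0 | st_neq0] := eqVneq (s + t) 0.
  have t0 : t = 0 by lra.
  apply: (in_simplex_sum_convex (a := 1) (b := 0)) sum_i sum_j => // [|l]; first by rewrite addr0.
  by rewrite /move_mass t0; ring.
apply: (in_simplex_sum_convex (a := s / (s + t)) (b := t / (s + t))) sum_i sum_j => [||| l].
- by rewrite divr_ge0 ?addr_ge0.
- by rewrite divr_ge0 ?addr_ge0.
- by rewrite -mulrDl divff.
- by rewrite /move_mass; field.
Qed.

Lemma in_simplex_sumP A x : in_simplex_sum A x <-> hall_feasible A x.
Proof. by split; [apply: in_simplex_sum_hall_feasible | apply: hall_feasible_in_simplex_sum]. Qed.

Lemma card_covered_split A G H :
  (forall k, k \in P -> A k \subset G -> (A k \subset H) || (A k \subset G :\: H)) ->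
  (#|covered A G| <= #|covered A H| + #|covered A (G :\: H)|)%N.
Proof.
move=> split_G; apply: leq_trans (leq_card_setU _ _).1.
apply/subset_leq_card/subsetP => k; rewrite !inE => /andP[kP /(split_G k kP)].
by rewrite kP.
Qed.

End HallTheorem.

Section BuildingClosure.
Variables (r : nat) (Fam : {set {set 'I_r}}).

Lemma building_closure_fam F : F \in Fam -> F \in building_closure Fam.
Proof. by move=> FFam; apply/bigcapP => B /and3P[/subsetP FamB _ _]; apply: FamB. Qed.

Lemma building_closure_set1 i : [set i] \in building_closure Fam.
Proof. by apply/bigcapP => B /and3P[_ /forallP]. Qed.

Lemma building_closureU F G : F \in building_closure Fam -> G \in building_closure Fam ->
  F :&: G != set0 -> F :|: G \in building_closure Fam.
Proof.
move=> /bigcapP FB /bigcapP GB FG; apply/bigcapP => B /[dup] /FB FB' /[dup] /GB GB'.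
by case/and3P => _ _ /forall_inP/(_ F FB')/forall_inP/(_ G GB')/implyP; apply.
Qed.

Lemma covered_le_sum_building_closure (R : numDomainType) (x : 'I_r -> R) :
  (forall F, F \in Fam -> F != set0) ->
  (forall G, G \in building_closure Fam -> #|covered Fam id G|%:R <= \sum_(l in G) x l) ->
  forall G, #|covered Fam id G|%:R <= \sum_(l in G) x l.
Proof.
move=> Fne covB G; have [n] := ubnP #|G|; elim: n G => // n IH G /ltnSE cardG.
have [-> | [i iG]] := set_0Vmem G.
  rewrite big_set0 (_ : covered Fam id set0 = set0) ?cards0 //.
  apply/setP => F; rewrite !inE subset0.
  by case FFam: (F \in Fam); [exact/negbTE/Fne | ].
pose inside H := [&& H \in building_closure Fam, i \in H & H \subset G].
have inside_i : inside [set i] by rewrite /inside building_closure_set1 set11 sub1set iG.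
case: (@arg_maxnP _ [set i] inside (fun H => #|H|) inside_i) => H /and3P[HB iH HG] Hmax.
have split_G F : F \in Fam -> id F \subset G -> (id F \subset H) || (id F \subset G :\: H).
  move=> FFam FG; case: (boolP (F :&: H == set0)) => [FH0 | FH].
    by rewrite subsetD FG -setI_eq0 FH0 orbT.
  have inside_FH : inside (F :|: H).
    apply/and3P; split; first exact: building_closureU (building_closure_fam FFam) HB FH.
      by rewrite inE iH orbT.
    by rewrite subUset FG HG.
  have /eqP -> : H == F :|: H by rewrite eqEcard subsetUr; apply: Hmax.
  by rewrite subsetUl.
have ltGH : (#|G :\: H| < n)%N.
  apply: leq_trans cardG; apply/proper_card/properP; split; first exact: subsetDl.
  by exists i => //; rewrite inE iH.
rewrite (big_setID H) (setIidPr HG).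
apply: le_trans (lerD (covB H HB) (IH _ ltGH)).
by rewrite -natrD ler_nat card_covered_split.
Qed.

End BuildingClosure.

Theorem proposition3p12 (R : realType) (r : nat) (Fam : {set {set 'I_r}}) :
  (forall F, F \in Fam -> F != set0) ->
  (forall x : 'I_r -> R,
     minkowski_simplex Fam x <->
     [/\ (forall i, 0 <= x i), \sum_i x i = #|Fam|%:R &
         forall G : {set 'I_r},
           #|[set F in Fam | F \subset G]|%:R <= \sum_(i in G) x i]) /\
  (forall x : 'I_r -> R,
     minkowski_simplex Fam x <->
     [/\ (forall i, 0 <= x i), \sum_i x i = #|Fam|%:R &
         forall G : {set 'I_r}, G \in building_closure Fam ->
           #|[set F in Fam | F \subset G]|%:R <= \sum_(i in G) x i]).
Proof.
move=> Fne.
have minkowskiP x : minkowski_simplex Fam x <->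
    [/\ (forall i, 0 <= x i), \sum_i x i = #|Fam|%:R &
         forall G, #|covered Fam id G|%:R <= \sum_(i in G) x i].
  rewrite -[minkowski_simplex _ _]/(in_simplex_sum Fam id x) in_simplex_sumP.
  split=> [feas | [_ sum_x cov]]; last by split.
  by case: (feas) => sum_x cov; split=> // i; apply: hall_feasible_ge0 feas.
split=> // x; rewrite minkowskiP.
split=> [[x_ge0 sum_x cov] | [x_ge0 sum_x covB]]; split=> // G; first by move=> _; apply: cov.
exact: covered_le_sum_building_closure.
Qed.
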